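(* Let $G$ be a $2$-connected graph, let $F\subseteq E(G)$ be an inclusion-wise minimal set of edges such that $T=G/F$ is a cactus, let $\mathcal{W}$ be the $T$-witness structure of $G$, and let $f:V(G)\to\{1,2,3\}$ be a coloring compatible with $\mathcal{W}$. Let $Y,Z$ be two distinct monochromatic components of $f$, and let $P=(v_1,\dots,v_\ell)$, $\ell\ge2$, be a connected component of $G-(Y\cup Z)$ that is a maximal cable path in $G$ with $N_G(v_1)\subseteq Y\cup\{v_2\}$ and $N_G(v_\ell)\subseteq Z\cup\{v_{\ell-1}\}$. Then every vertex of $P$ forms a singleton witness set of $\mathcal{W}$, and each of $Y$ and $Z$ contains a big witness set of $\mathcal{W}$.
   Context: A cactus is a connected graph in which every edge lies in at most one cycle. For $F\subseteq E(G)$, $G/F$ is the graph whose vertices correspond to the parts of the partition of $V(G)$ into the vertex sets of connected components of $(V(F),F)$ and singletons $\{v\}$ for $v\notin V(F)$, two parts adjacent iff some edge of $G$ joins them; this partition is the $G/F$-witness structure $\mathcal{W}$, with $W(t)$ the part for $t\in V(G/F)$. A witness set is big if it has at least two vertices, singleton otherwise. A cable path in a graph $H$ is a path $(v_1,\dots,v_q)$ such that $N_H(v_i)=\{v_{i-1},v_{i+1}\}$ for each $2\le i\le q-1$; it is maximal if it is not contained in a longer cable path. A coloring $f:V(G)\to\{1,2,3\}$ is compatible with $\mathcal{W}$ if: (1) every witness set is monochromatic; (2) for every edge $t_xt_y\in E(T)$ with $W(t_x),W(t_y)$ both big, $f(W(t_x))\ne f(W(t_y))$; (3) for every cable path $(t_x,t_1,\dots,t_q,t_y)$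 in $T$ ($q\ge1$) with $W(t_x),W(t_y)$ big and all $W(t_i)$ singleton, $f(W(t_x))\neq f(W(t_1))$ and $f(W(t_y))\ne f(W(t_q))$. A monochromatic component of a coloring is an inclusion-wise maximal set of vertices that all have the same color and induce a connected subgraph. *)

From mathcomp Require Import all_boot.
Set Implicit Arguments. Unset Strict Implicit. Unset Printing Implicit Defensive.

(* Simple graphs: a vertex set S : {set V} inside a finType V and an
   adjacency relation adj : rel V (assumed symmetric and irreflexive
   where relevant). Only adjacencies between vertices of S matter. *)
Section Graphs.
Variable V : finType.

Definition restr (S : {set V}) (adj : rel V) : rel V :=
  [rel x y | [&& adj x y, x \in S & y \in S]].

Definition gconnected (S : {set V}) (adj : rel V) : Prop :=
  forall x y, x \in S -> y \in S -> connect (restr S adj) x y.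

Definition nbh (S : {set V}) (adj : rel V) (v : V) : {set V} :=
  [set u in S | adj v u].

Definition is_gpath (S : {set V}) (adj : rel V) (p : seq V) : bool :=
  [&& uniq p, all (fun x => x \in S) p & sorted adj p].

Definition is_gcycle (S : {set V}) (adj : rel V) (c : seq V) : bool :=
  [&& uniq c, 2 < size c, all (fun x => x \in S) c & cycle adj c].

Definition cycle_edges (c : seq V) : {set {set V}} :=
  [set [set x; next c x] | x in c].

(* cactus: connected, and every edge lies in at most one cycle *)
Definition cactus (S : {set V}) (adj : rel V) : Prop :=
  gconnected S adj /\
  forall c1 c2 E, is_gcycle S adj c1 -> is_gcycle S adj c2 ->
    E \in cycle_edges c1 -> E \in cycle_edges c2 ->
    cycle_edges c1 = cycle_edges c2.

(* cable path: path (v_1..v_q) with N(v_i) = {v_(i-1), v_(i+1)}, 2<=i<=q-1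
   (0-based indices 0 < i < size p - 1; the default x0 is irrelevant) *)
Definition cable_path (S : {set V}) (adj : rel V) (p : seq V) : Prop :=
  is_gpath S adj p /\
  forall i (x0 : V), 0 < i -> i.+1 < size p ->
    nbh S adj (nth x0 p i) = [set nth x0 p i.-1; nth x0 p i.+1].

Definition max_cable_path (S : {set V}) (adj : rel V) (p : seq V) : Prop :=
  cable_path S adj p /\
  forall q, cable_path S adj q -> infix p q || infix (rev p) q ->
    size q <= size p.

Definition conn_comp (S : {set V}) (adj : rel V) (C : {set V}) : Prop :=
  [/\ C \subset S, C != set0, gconnected C adj &
    forall C' : {set V}, C \subset C' -> C' \subset S -> gconnected C' adj -> C' = C].

End Graphs.

Section Problem.
Variable V : finType.
Variable e : rel V.

Definition two_connected : Prop :=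
  2 < #|V| /\ gconnected [set: V] e /\
  forall v, gconnected ([set: V] :\ v) e.

(* F is a set of edges of G, stored symmetrically as ordered pairs *)
Definition edge_subset (F : {set V * V}) : Prop :=
  forall x y, (x, y) \in F -> e x y /\ (y, x) \in F.

Definition frel (F : {set V * V}) : rel V := [rel x y | (x, y) \in F].

(* W(v): the part of the G/F-witness structure containing v, i.e. the
   vertex set of the component of (V(F),F) containing v, or {v} *)
Definition wit (F : {set V * V}) (v : V) : {set V} :=
  [set u | connect (frel F) v u].

(* the witness structure = vertex set of G/F *)
Definition wstruct (F : {set V * V}) : {set {set V}} :=
  [set wit F v | v in V].

Definition qadj : rel {set V} :=
  [rel A B : {set V} | (A != B) && [exists x in A, exists y in B, e x y]].

Definition contraction_cactus (F : {set V * V}) : Prop :=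
  cactus (wstruct F) qadj.

Definition minimal_cactus_set (F : {set V * V}) : Prop :=
  [/\ edge_subset F, contraction_cactus F &
    forall F' : {set V * V}, edge_subset F' -> F' \proper F -> ~ contraction_cactus F'].

Definition compatible (F : {set V * V}) (f : V -> 'I_3) : Prop :=
  [/\
      (forall W, W \in wstruct F -> forall x y, x \in W -> y \in W -> f x = f y),
      (forall tx ty, tx \in wstruct F -> ty \in wstruct F -> qadj tx ty ->
         1 < #|tx| -> 1 < #|ty| -> forall x y, x \in tx -> y \in ty -> f x != f y) &
      (* (3) cable paths (tx, t1..tq, ty), q >= 1, of T between big sets
         through singletons *)
      (forall tx ty (mid : seq {set V}), mid != [::] ->
         cable_path (wstruct F) qadj (tx :: rcons mid ty) ->
         1 < #|tx| -> 1 < #|ty| -> all (fun t : {set V} => #|t| == 1) mid ->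
         (forall x y, x \in tx -> y \in head tx mid -> f x != f y) /\
         (forall x y, x \in ty -> y \in last ty mid -> f x != f y))].

Definition mono_conn (f : V -> 'I_3) (S : {set V}) : Prop :=
  [/\ S != set0, (forall x y, x \in S -> y \in S -> f x = f y) & gconnected S e].

Definition mono_comp (f : V -> 'I_3) (Y : {set V}) : Prop :=
  mono_conn f Y /\ forall S : {set V}, mono_conn f S -> Y \subset S -> S = Y.

End Problem.

From mathcomp Require Import all_boot zify.
Set Implicit Arguments. Unset Strict Implicit. Unset Printing Implicit Defensive.

(* Every F-edge is monochromatic, so by maximality of Y and Z no F-edge leaves
   P, and the witness sets meeting P are intervals of P. As P is attached to
   the rest of G only at its ends, G - P is connected, hence so is G - W for
   each such witness set W: the node W of the cactus T = G/F is not a cut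
   vertex, so it has at most two neighbours in T.
   If an edge v_i v_(i+1) of P were in F, removing it from F would split W
   into W1 and W2, each having exactly one other neighbour in the new
   quotient; its cycles are those of T with W expanded to the edge W1 W2, so
   it is still a cactus, against the minimality of F.
   Finally v_1 has two neighbours in Y (otherwise P would extend past v_1),
   while W(v_1) also has a neighbour towards Z; so these two neighbours lie in
   one witness set, which is big and contained in Y. Z is symmetric. *)

Section Connectivity.
Variable T : finType.
Implicit Types (r : rel T) (S A : {set T}).

Lemma connect_preserve r (P : pred T) x y :
  (forall a b, P a -> r a b -> P b) -> P x -> connect r x y -> P y.
Proof.
move=> cl Px /connectP [s pth ->]; elim: s x Px pth => [|z s IH] x Px //= /andP [rxz pth].
exact: IH (cl _ _ Px rxz) pth.
Qed.

Lemma connect_transfer r r' (P : pred T) x y :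
  (forall a b, P a -> r a b -> r' a b && P b) -> P x -> connect r x y -> connect r' x y.
Proof.
move=> cl Px /connectP [s pth ->]; elim: s x Px pth => [|z s IH] x Px //= /andP [rxz pth].
case/andP: (cl _ _ Px rxz) => r'xz Pz.
exact: connect_trans (connect1 r'xz) (IH _ Pz pth).
Qed.

Lemma restrE S r a b : restr S r a b = [&& r a b, a \in S & b \in S].
Proof. by []. Qed.

Lemma restr_sym S r : symmetric r -> symmetric (restr S r).
Proof. by move=> rs a b; rewrite !restrE rs; case: (r b a); case: (a \in S); case: (b \in S). Qed.

Lemma connect_restrS S1 S2 r x y :
  S1 \subset S2 -> connect (restr S1 r) x y -> connect (restr S2 r) x y.
Proof.
move=> sub; apply: connect_sub => a b; rewrite restrE => /and3P [rab aS bS].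
by apply: connect1; rewrite restrE rab !(subsetP sub).
Qed.

Lemma gconnectedU A1 A2 r a b :
  gconnected A1 r -> gconnected A2 r -> a \in A1 -> b \in A2 ->
  connect (restr (A1 :|: A2) r) a b -> connect (restr (A1 :|: A2) r) b a ->
  gconnected (A1 :|: A2) r.
Proof.
move=> c1 c2 aA bA ab ba x y; have s1 := subsetUl A1 A2; have s2 := subsetUr A1 A2.
rewrite !inE => /orP [xA|xA] /orP [yA|yA].
- exact: connect_restrS s1 (c1 _ _ xA yA).
- apply: connect_trans (connect_restrS s1 (c1 _ _ xA aA)) _.
  exact: connect_trans ab (connect_restrS s2 (c2 _ _ bA yA)).
- apply: connect_trans (connect_restrS s2 (c2 _ _ xA bA)) _.
  exact: connect_trans ba (connect_restrS s1 (c1 _ _ aA yA)).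
- exact: connect_restrS s2 (c2 _ _ xA yA).
Qed.

Lemma connect_first_entry S A r x u :
  x \notin A -> u \in A -> connect (restr S r) x u ->
  exists a b, [/\ a \notin A, b \in A, b \in S, r a b & connect (restr (S :\: A) r) x a].
Proof.
move=> xA uA /connectP [s pth uE]; elim: s x xA pth uE => [|z s IH] x xA /=.
  by move=> _ uE; rewrite -uE uA in xA.
rewrite restrE => /andP [/and3P [rxz xS zS] pth] uE.
case: (boolP (z \in A)) => zA; first by exists x, z; split=> //; exact: connect0.
case: (IH z zA pth uE) => a [b [aA bA bS rab za]]; exists a, b; split=> //.
by apply: connect_trans za; apply: connect1; rewrite restrE rxz !inE xA xS zA zS.
Qed.

Lemma path_restr S r a s : path (restr S r) a s ->
  [/\ path r a s, all (mem S) s & (s != [::] -> a \in S)].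
Proof.
elim: s a => [|x s IH] a //= /andP [/and3P [rax aS xS] pth].
by case: (IH _ pth) => p1 p2 _; rewrite rax p1 xS p2.
Qed.

Lemma restr_upath S r a b :
  connect (restr S r) a b -> a != b ->
  exists s, [/\ uniq (a :: s), path r a s, last a s = b, a \in S & all (mem S) s].
Proof.
move/connectP=> [s0 pth0 ->]; case: (shortenP pth0) => s pth u _ ab.
case: (path_restr pth) => p1 p2 p3; exists s; split=> //; apply: p3.
by apply: contraNneq ab => ->.
Qed.

End Connectivity.

Lemma nat_crossing (P : nat -> bool) a b : a <= b -> P a -> ~~ P b ->
  exists k, [/\ a <= k, k < b, P k & ~~ P k.+1].
Proof.
elim: b => [|b IH] ab Pa Pb; first by move: ab Pa; rewrite leqn0 => /eqP ->; rewrite (negPf Pb).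
case: (eqVneq a b.+1) => [eab|nab]; first by rewrite -eab Pa in Pb.
have ab' : a <= b by move: ab nab; clear; lia.
case: (boolP (P b)) => Pb'; first by exists b; split.
by case: (IH ab' Pa Pb') => k [h1 h2 h3 h4]; exists k; split=> //; rewrite ltnS ltnW.
Qed.

Section Cycles.
Variable T : finType.
Implicit Types (r : rel T) (S : {set T}) (s c : seq T).

Lemma head_mem (a : T) s : s != [::] -> head a s \in s.
Proof. by case: s => //= h s _; rewrite mem_head. Qed.

Lemma last_mem (a : T) s : s != [::] -> last a s \in s.
Proof. by case: s => //= h s _; rewrite mem_last. Qed.

Lemma head_nonnil (a b : T) s : s != [::] -> head a s = head b s.
Proof. by case: s. Qed.

Lemma last_nonnil (a b : T) s : s != [::] -> last a s = last b s.
Proof. by case: s. Qed.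

Lemma uniq_head_last_neq (a : T) s : uniq s -> 1 < size s -> head a s != last a s.
Proof.
case: s => [|h [|h2 s]] //= /andP [hn _] _.
by apply: contraNneq hn => ->; apply: mem_last.
Qed.

Lemma path_head_rel r a s : path r a s -> s != [::] -> r a (head a s).
Proof. by case: s => //= h s /andP []. Qed.

Lemma cycle_head_rel r a s : cycle r (a :: s) -> s != [::] -> r a (head a s).
Proof. by case: s => [|h s] //= /andP []. Qed.

Lemma cycle_last_rel r a s : cycle r (a :: s) -> r (last a s) a.
Proof. by rewrite /= rcons_path => /andP []. Qed.

Lemma cycle_path r a s : cycle r (a :: s) -> path r a s.
Proof. by rewrite /= rcons_path => /andP []. Qed.

Lemma eq_set2_mem (a b c d : T) : [set a; b] = [set c; d] -> (a == c) || (a == d).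
Proof. by move/setP/(_ a); rewrite !inE eqxx /= => /esym. Qed.

Fixpoint path_edges s : {set {set T}} :=
  if s is x :: s' then (if s' is y :: _ then [set x; y] |: path_edges s' else set0) else set0.

Lemma path_edges_cons2 x y s :
  path_edges [:: x, y & s] = [set x; y] |: path_edges (y :: s).
Proof. by []. Qed.

Lemma path_edges_rcons x s y :
  path_edges (rcons (x :: s) y) = path_edges (x :: s) :|: [set [set last x s; y]].
Proof.
elim: s x => [|z s IH] x; first by rewrite /= setU0 set0U.
by rewrite !rcons_cons path_edges_cons2 -rcons_cons IH path_edges_cons2 setUA.
Qed.

Lemma path_edges_mem s E : E \in path_edges s ->
  exists a b, [/\ a \in s, b \in s & E = [set a; b]].
Proof.
elim: s => [|x s IH]; first by rewrite inE.
case: s IH => [|y s] IH; first by rewrite /= inE.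
rewrite path_edges_cons2 in_setU in_set1 => /orP [/eqP ->|].
  by exists x, y; rewrite !inE !eqxx ?orbT.
by move/IH=> [a [b [aS bS ->]]]; exists a, b; split=> //; rewrite in_cons ?aS ?bS orbT.
Qed.

Lemma cycle_edges_mem c E X : E \in cycle_edges c -> X \in E -> X \in c.
Proof. by case/imsetP=> x xc -> /set2P [] ->; rewrite ?mem_next. Qed.

Lemma cycle_edges_next_at y0 y s : uniq (y :: s) ->
  [set [set z; next_at z y0 y s] | z in y :: s] = path_edges (y :: rcons s y0).
Proof.
elim: s y => [|w s IH] y.
  move=> _; apply/setP=> E; rewrite /= !inE orbF; apply/imsetP/eqP.
    by case=> z; rewrite inE => /eqP -> ->; rewrite eqxx.
  by move->; exists y; rewrite ?inE ?eqxx.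
move=> u; have yws : y \notin w :: s by case/andP: u.
have uw : uniq (w :: s) by case/andP: u.
rewrite rcons_cons path_edges_cons2 -rcons_cons -(IH w uw).
apply/setP=> E; rewrite in_setU in_set1; apply/imsetP/orP.
  case=> z; rewrite inE => /orP [/eqP ->|zin] ->; first by rewrite /= eqxx; left.
  have zny : z != y by apply: contraNneq yws => <-.
  by rewrite /= (negPf zny); right; apply/imsetP; exists z.
case => [/eqP ->|/imsetP [z zin ->]]; first by exists y; rewrite ?inE ?eqxx //= eqxx.
have zny : z != y by apply: contraNneq yws => <-.
by exists z; rewrite ?inE ?zin ?orbT //= (negPf zny).
Qed.

Lemma cycle_edges_cons a s : uniq (a :: s) -> s != [::] ->
  cycle_edges (a :: s) =
  [set [set a; head a s]] :|: path_edges s :|: [set [set last a s; a]].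
Proof.
case: s => [|h s] // u _.
have -> : cycle_edges (a :: h :: s) = path_edges (a :: rcons (h :: s) a).
  by rewrite /cycle_edges /=; exact: (cycle_edges_next_at a u).
by rewrite rcons_cons path_edges_cons2 -rcons_cons path_edges_rcons setUA.
Qed.

Lemma cycle_edges_rot n c : uniq c -> cycle_edges (rot n c) = cycle_edges c.
Proof.
move=> u; apply/setP=> E; apply/imsetP/imsetP; case=> x xc ->; exists x;
  rewrite ?mem_rot // ?(next_rot n u) //; by rewrite mem_rot in xc.
Qed.

Lemma cycle_edges_rev c : uniq c -> cycle_edges (rev c) = cycle_edges c.
Proof.
move=> u; apply/setP=> E; apply/imsetP/imsetP; case=> x xc ->.
  rewrite mem_rev in xc; exists (prev c x); first by rewrite mem_prev.
  by rewrite (next_rev u) next_prev // setUC.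
exists (next c x); first by rewrite mem_rev mem_next.
by rewrite (next_rev u) prev_next // setUC.
Qed.

Lemma path_edges_avoid a s : a \notin s -> s != [::] -> uniq (a :: s) ->
  path_edges s = [set E in cycle_edges (a :: s) | a \notin E].
Proof.
move=> aS sne u; apply/setP => E; rewrite inE cycle_edges_cons // !in_setU.
apply/idP/idP.
  move=> Ep; rewrite Ep orbT /=.
  case: (path_edges_mem Ep) => x [y [xs ys ->]]; rewrite !inE negb_or.
  by apply/andP; split; apply: contraNneq aS => ->.
case/andP => /orP [/orP [|->//]|]; rewrite inE => /eqP ->; by rewrite !inE eqxx ?orbT.
Qed.

Lemma is_gcycle_rot S r n c : is_gcycle S r c -> is_gcycle S r (rot n c).
Proof.
case/and4P=> u sz al cy.
by rewrite /is_gcycle rot_uniq size_rot rot_cycle u sz cy (eq_all_r (mem_rot n c)) al.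
Qed.

Lemma is_gcycle_rev S r c : symmetric r -> is_gcycle S r c -> is_gcycle S r (rev c).
Proof.
move=> sym; case/and4P=> u sz al cy.
rewrite /is_gcycle rev_uniq size_rev u sz all_rev al rev_cycle.
by rewrite (@eq_cycle _ _ r).
Qed.

Lemma is_gcycle_consP S r a s : is_gcycle S r (a :: s) ->
  [/\ a \notin s, uniq s, 1 < size s, {subset a :: s <= S} & cycle r (a :: s)].
Proof. by case/and4P => /andP [an u] sz /allP al cy. Qed.

Lemma gcycle_through S r U A B : symmetric r -> U \in S ->
  A \in S :\ U -> B \in S :\ U -> A != B -> r U A -> r U B ->
  connect (restr (S :\ U) r) A B ->
  exists s, [/\ is_gcycle S r (U :: A :: s), U \notin A :: s &
    cycle_edges (U :: A :: s) =
    [set [set U; A]] :|: path_edges (A :: s) :|: [set [set B; U]]].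
Proof.
move=> sym US AS BS nAB rA rB /restr_upath /(_ nAB) [s [u pth lst _ al]].
have sub x : x \in A :: s -> x \in S :\ U.
  by rewrite inE => /orP [/eqP -> //|]; move/(allP al).
have Un : U \notin A :: s by apply/negP => /sub; rewrite !inE eqxx.
have sne : s != [::] by move: lst nAB; case: (s) => //= ->; rewrite eqxx.
exists s; split=> //; last by rewrite cycle_edges_cons ?cons_uniq ?Un ?u //= lst.
apply/and4P; split.
- by rewrite cons_uniq Un u.
- by case: (s) sne.
- apply/allP => x; rewrite inE => /orP [/eqP -> //|].
  by move/sub; rewrite inE => /andP [].
- by rewrite /cycle rcons_cons /= rA rcons_path pth lst sym rB.
Qed.

(* Two such cycles share the edge [UA1], so they coincide; but the edge
   [A3U] of the second one is not an edge of the first. *)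
Lemma cactus_three_nbrs_cut S r U A1 A2 A3 :
  symmetric r -> cactus S r -> U \in S ->
  A1 \in S :\ U -> A2 \in S :\ U -> A3 \in S :\ U ->
  r U A1 -> r U A2 -> r U A3 -> A1 != A2 -> A1 != A3 -> A2 != A3 ->
  ~ gconnected (S :\ U) r.
Proof.
move=> sym [_ cac] US A1S A2S A3S r1 r2 r3 n12 n13 n23 con.
case: (gcycle_through sym US A1S A2S n12 r1 r2 (con _ _ A1S A2S)) => s2 [c2 U2 E2].
case: (gcycle_through sym US A1S A3S n13 r1 r3 (con _ _ A1S A3S)) => s3 [c3 U3 E3].
have h2 : [set U; A1] \in cycle_edges (U :: A1 :: s2) by rewrite E2 !inE eqxx.
have h3 : [set U; A1] \in cycle_edges (U :: A1 :: s3) by rewrite E3 !inE eqxx.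
have : [set A3; U] \in cycle_edges (U :: A1 :: s3) by rewrite E3 !inE eqxx !orbT.
rewrite -(cac _ _ _ c2 c3 h2 h3) E2 !inE.
have A3nU : A3 != U by move: A3S; rewrite !inE => /andP [].
case/orP => [/orP [/eqP /eq_set2_mem|]|/eqP /eq_set2_mem].
- by rewrite (negPf A3nU) eq_sym (negPf n13).
- move/path_edges_mem => [a [b [aS bS /setP /(_ U)]]].
  by rewrite !inE eqxx orbT => /esym /orP [] /eqP eU; move: U2; rewrite eU ?aS ?bS.
- by rewrite (negPf A3nU) eq_sym (negPf n23).
Qed.

End Cycles.

Section Quotient.
Variables (V : finType) (e : rel V).
Implicit Types (F : {set V * V}) (A B X : {set V}).

Lemma frelE F a b : frel F a b = ((a, b) \in F).
Proof. by []. Qed.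

Lemma witP F u v : (u \in wit F v) = connect (frel F) v u.
Proof. by rewrite inE. Qed.

Lemma wit_refl F v : v \in wit F v.
Proof. by rewrite witP connect0. Qed.

Lemma wit_in F v : wit F v \in wstruct F.
Proof. exact: imset_f. Qed.

Lemma wstructP F X : X \in wstruct F -> exists z, X = wit F z.
Proof. by case/imsetP=> z _ ->; exists z. Qed.

Lemma wit_neq F z z0 : z \notin wit F z0 -> wit F z != wit F z0.
Proof. by apply: contra => /eqP <-; rewrite wit_refl. Qed.

Lemma connect_frelS F1 F2 a b : F1 \subset F2 ->
  connect (frel F1) a b -> connect (frel F2) a b.
Proof. by move=> sub; apply: connect_sub => u w uw; apply/connect1/(subsetP sub). Qed.

Section EdgeSubset.
Variable F : {set V * V}.
Hypothesis HF : edge_subset e F.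

Lemma frel_sym : symmetric (frel F).
Proof. by move=> x y; apply/idP/idP => /HF []. Qed.

Lemma wit_sym u v : (u \in wit F v) = (v \in wit F u).
Proof. by rewrite !witP (sym_connect_sym frel_sym). Qed.

Lemma wit_eq u v : u \in wit F v -> wit F u = wit F v.
Proof.
rewrite witP => cvu; apply/setP => w; rewrite !witP.
by rewrite (same_connect (sym_connect_sym frel_sym) cvu).
Qed.

End EdgeSubset.

Lemma qadj_sym : symmetric e -> symmetric (qadj e).
Proof.
move=> es A B; rewrite /qadj /= eq_sym; congr (_ && _).
by apply/existsP/existsP => -[x /andP [xA /existsP [y /andP [yB exy]]]];
  exists y; rewrite yB /=; apply/existsP; exists x; rewrite xA es.
Qed.

Lemma qadjI A B x y : A != B -> x \in A -> y \in B -> e x y -> qadj e A B.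
Proof.
move=> AB xA yB exy; rewrite /qadj /= AB /=; apply/existsP; exists x; rewrite xA /=.
by apply/existsP; exists y; rewrite yB.
Qed.

Lemma qadjE A B : qadj e A B -> A != B /\ exists x y, [/\ x \in A, y \in B & e x y].
Proof.
rewrite /qadj /= => /andP [AB /existsP [x /andP [xA /existsP [y /andP [yB exy]]]]].
by split=> //; exists x, y.
Qed.

Lemma connect_wit F (S : {set V}) (TS : {set {set V}}) x y :
  {in S, forall z, wit F z \in TS} -> x \in S ->
  connect (restr S e) x y -> connect (restr TS (qadj e)) (wit F x) (wit F y).
Proof.
move=> hS xS; pose P z := (z \in S) && connect (restr TS (qadj e)) (wit F x) (wit F z).
move=> cxy; suff /andP [] : P y by [].
apply: (connect_preserve (P:=P)) cxy; last by rewrite /P xS connect0.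
move=> a b /andP [aS ca]; rewrite restrE => /and3P [eab _ bS]; rewrite /P bS /=.
case: (eqVneq (wit F a) (wit F b)) => [<- //|nab].
apply: connect_trans ca (connect1 _); rewrite restrE !hS // !andbT.
exact: qadjI nab (wit_refl _ _) (wit_refl _ _) eab.
Qed.

End Quotient.

Section Coloring.
Variables (V : finType) (e : rel V) (F : {set V * V}) (f : V -> 'I_3).
Hypothesis e_sym : symmetric e.
Hypothesis HF : edge_subset e F.
Hypothesis Hmono : forall W, W \in wstruct F -> forall x y, x \in W -> y \in W -> f x = f y.
Implicit Types Y Z : {set V}.

Lemma mono_comp_grow Y u w :
  mono_comp e f Y -> u \in Y -> e u w -> f w = f u -> w \in Y.
Proof.
move=> [[ne mono con] mx] uY euw fwu.
suff <- : w |: Y = Y by rewrite setU11.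
apply: mx; last exact: subsetUr.
split; first by apply/set0Pn; exists w; rewrite setU11.
  move=> x y; rewrite !inE => /orP [/eqP ->|xY] /orP [/eqP ->|yY] //.
  - by rewrite fwu (mono _ _ uY yY).
  - by rewrite fwu (mono _ _ uY xY).
  - exact: mono.
apply: (@gconnectedU _ [set w] Y e w u); rewrite ?inE ?eqxx //.
- by move=> a b; rewrite !inE => /eqP -> /eqP ->.
- by apply: connect1; rewrite restrE e_sym euw !inE eqxx uY orbT.
- by apply: connect1; rewrite restrE euw !inE eqxx uY orbT.
Qed.

Lemma mono_comps_disjoint Y Z w :
  mono_comp e f Y -> mono_comp e f Z -> Y != Z -> w \in Y -> w \notin Z.
Proof.
move=> [[_ Ym Yc] Ymx] [[_ Zm Zc] Zmx] YZ wY; apply/negP => wZ; move/negP: YZ; apply.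
have mc : mono_conn e f (Y :|: Z).
  split; first by apply/set0Pn; exists w; rewrite inE wY.
    move=> x y; rewrite !inE => /orP [xY|xZ] /orP [yY|yZ].
    - exact: Ym.
    - by rewrite (Ym _ _ xY wY) (Zm _ _ wZ yZ).
    - by rewrite (Zm _ _ xZ wZ) (Ym _ _ wY yY).
    - exact: Zm.
  by apply: (@gconnectedU _ Y Z e w w) => //; apply: connect0.
by apply/eqP; rewrite -(Ymx _ mc (subsetUl _ _)) (Zmx _ mc (subsetUr _ _)).
Qed.

Lemma F_edge_color a b : (a, b) \in F -> f a = f b.
Proof.
move=> ab; apply: (Hmono (wit_in F a)); first exact: wit_refl.
by rewrite witP; apply: connect1.
Qed.

Lemma wit_sub_mono_comp Y u w : mono_comp e f Y -> u \in Y -> w \in wit F u -> w \in Y.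
Proof.
move=> HY uY; rewrite witP; apply: (connect_preserve (P := mem Y)) => // a b aY ab.
by case: (HF ab) => eab _; exact: mono_comp_grow HY aY eab (esym (F_edge_color ab)).
Qed.

End Coloring.

Section CablePathComponent.
Variables (V : finType) (e : rel V).
Hypothesis e_sym : symmetric e.
Hypothesis G2 : two_connected e.
Variable F : {set V * V}.
Hypothesis HF : minimal_cactus_set e F.
Variable f : V -> 'I_3.
Hypothesis Hmono : forall W, W \in wstruct F -> forall x y, x \in W -> y \in W -> f x = f y.
Variables Y Z : {set V}.
Hypothesis HY : mono_comp e f Y.
Hypothesis HZ : mono_comp e f Z.
Variable p : seq V.
Hypothesis Hsize : 2 <= size p.
Hypothesis Hcomp : conn_comp (~: (Y :|: Z)) e [set x in p].
Hypothesis Hcable : max_cable_path [set: V] e p.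
Hypothesis H1 : forall x0 : V, nbh [set: V] e (nth x0 p 0) \subset Y :|: [set nth x0 p 1].
Hypothesis Hl : forall x0 : V,
  nbh [set: V] e (nth x0 p (size p).-1) \subset Z :|: [set nth x0 p (size p).-2].
(* A default element for [nth]; all indices used below are smaller than [size p]. *)
Variable d : V.

Local Notation n := (size p).
Local Notation v k := (nth d p k).
Local Notation ix w := (index w p).

Let F_edges : edge_subset e F. Proof. by case: HF. Qed.

Lemma p_uniq : uniq p.
Proof. by case: Hcable => [[/and3P []]]. Qed.

Lemma p_adj k : k.+1 < n -> e (v k) (v k.+1).
Proof. by case: Hcable => [[/and3P [_ _ /(sortedP d) h] _] _] /h. Qed.

Lemma v_mem k : k < n -> v k \in p.
Proof. exact: mem_nth. Qed.

Lemma index_v k : k < n -> ix (v k) = k.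
Proof. by move=> h; rewrite index_uniq // p_uniq. Qed.

Lemma v_index w : w \in p -> v (ix w) = w.
Proof. exact: nth_index. Qed.

Lemma index_p_lt w : w \in p -> ix w < n.
Proof. by rewrite index_mem. Qed.

Lemma v0_neq_v1 : v 0 != v 1.
Proof. by apply/eqP => /(congr1 (index^~ p)); rewrite !index_v //; lia. Qed.

Lemma p_notin_Y w : w \in p -> w \notin Y.
Proof.
case: Hcomp => sub _ _ _ wp; have := subsetP sub w.
by rewrite !inE wp negb_or => /(_ isT) /andP [].
Qed.

Lemma p_notin_Z w : w \in p -> w \notin Z.
Proof.
case: Hcomp => sub _ _ _ wp; have := subsetP sub w.
by rewrite !inE wp negb_or => /(_ isT) /andP [].
Qed.

Lemma Y_notin_p w : w \in Y -> w \notin p.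
Proof. by apply: contraTN => /p_notin_Y. Qed.

Lemma Z_notin_p w : w \in Z -> w \notin p.
Proof. by apply: contraTN => /p_notin_Z. Qed.

Lemma p_nbr_cases k w : k < n -> e (v k) w ->
  [\/ w \in p /\ (ix w = k.+1 \/ (ix w).+1 = k), k = 0 /\ w \in Y | k.+1 = n /\ w \in Z].
Proof.
move=> kn ew; have wnb : w \in nbh [set: V] e (v k) by rewrite !inE.
case: (posnP k) => [k0|kpos].
  move: (subsetP (H1 d) w); rewrite -k0 wnb !inE => /(_ isT) /orP [wY|/eqP ->].
    by constructor 2.
  by constructor 1; split; [apply: v_mem; lia | left; rewrite index_v //; lia].
case: (ltnP k.+1 n) => kn'.
  case: Hcable => [[_ cab] _]; move: wnb; rewrite (cab k d kpos kn') !inE.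
  by case/orP => /eqP ->; (constructor 1; split; [apply: v_mem; lia | rewrite index_v; lia]).
have kE : k = n.-1 by lia.
move: (subsetP (Hl d) w); rewrite -kE wnb !inE => /(_ isT) /orP [wZ|/eqP ->].
  by constructor 3; split=> //; lia.
by constructor 1; split; [apply: v_mem; lia | right; rewrite index_v //; lia].
Qed.

(* An F-edge is monochromatic, so an F-edge from P into Y or Z would let
   that monochromatic component grow into P. *)
Lemma F_edge_on_p a b : (a, b) \in F -> a \in p -> b \in p.
Proof.
move=> ab ap; case: (F_edges ab) => eab _; move: (eab); rewrite -{1}(v_index ap) => eab'.
have eba : e b a by rewrite e_sym.
have fba := F_edge_color Hmono ab.
case: (p_nbr_cases (index_p_lt ap) eab') => [[] //|[_ bY]|[_ bZ]].
- by move: (mono_comp_grow e_sym HY bY eba fba); rewrite (negPf (p_notin_Y ap)).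
- by move: (mono_comp_grow e_sym HZ bZ eba fba); rewrite (negPf (p_notin_Z ap)).
Qed.

Lemma wit_sub_p z w : z \in p -> w \in wit F z -> w \in p.
Proof.
move=> zp; rewrite witP; apply: (connect_preserve (P := mem p)) => // a b ap ab.
exact: F_edge_on_p ab ap.
Qed.

Lemma wit_same_side z0 k w : z0 \in p -> k < n -> v k \notin wit F z0 ->
  w \in wit F z0 -> (ix w < k) = (ix z0 < k).
Proof.
move=> z0p kn vkn; rewrite witP => cw.
pose Q b := [&& b \in p, b \in wit F z0 & (ix b < k) == (ix z0 < k)].
suff /and3P [_ _ /eqP //] : Q w.
apply: (connect_preserve (P := Q)) cw; last by rewrite /Q z0p wit_refl eqxx.
move=> a b /and3P [ap aW /eqP E] ab; have bp := F_edge_on_p ab ap.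
have bW : b \in wit F z0 by rewrite witP (connect_trans _ (connect1 ab)) // -witP.
rewrite /Q bp bW -E /=.
have ian : ix a != k by apply: contraNneq vkn => <-; rewrite v_index.
have ibn : ix b != k by apply: contraNneq vkn => <-; rewrite v_index.
case: (F_edges ab) => eab _; move: eab; rewrite -{1}(v_index ap) => eab.
case: (p_nbr_cases (index_p_lt ap) eab) => [[_ [] h]|[_ bY]|[_ bZ]].
- by apply/eqP; clear -h ian ibn; apply/idP/idP => ?; lia.
- by apply/eqP; clear -h ian ibn; apply/idP/idP => ?; lia.
- by rewrite (negPf (p_notin_Y bp)) in bY.
- by rewrite (negPf (p_notin_Z bp)) in bZ.
Qed.

Lemma connect_p_segment (S : {set V}) j k : j <= k -> k < n ->
  (forall m, j <= m -> m <= k -> v m \in S) -> connect (restr S e) (v j) (v k).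
Proof.
elim: k => [|k IH] jk kn hS; first by move: jk; rewrite leqn0 => /eqP ->.
case: (eqVneq j k.+1) => [->|ne]; first exact: connect0.
have jk' : j <= k by move: jk ne; clear; lia.
apply: connect_trans (IH jk' (ltnW kn) _) (connect1 _).
  by move=> m jm mk; apply: hS => //; apply: leqW.
by rewrite restrE p_adj // !hS // leqW.
Qed.

(* If [v 0] had only one neighbour in Y, prepending it would give a longer
   cable path; it has at least one since [v 1] is not a cut vertex. *)
Lemma first_Y_nbr : exists2 y1, y1 \in Y & e (v 0) y1.
Proof.
case: G2 => hV [_ hc].
have : ~~ ([set: V] \subset [set v 0; v 1]).
  by apply/negP => /subset_leq_card; rewrite cardsT cards2; move: hV; lia.
case/subsetPn => w _; rewrite !inE negb_or => /andP [w0 w1].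
move: (hc (v 1) (v 0) w); rewrite !inE v0_neq_v1 w1 => /(_ isT isT) /connectP [s pth wE].
case: s pth wE => [|h s] /=; first by move=> _ E; rewrite -E eqxx in w0.
rewrite restrE => /andP [/and3P [e0h _] hS _] _.
move: (subsetP (H1 d) h); rewrite !inE e0h => /(_ isT) /orP [hY|/eqP hE].
  by exists h.
by move: hS; rewrite hE !inE eqxx.
Qed.

Lemma first_two_Y_nbrs :
  exists y1 y2, [/\ y1 \in Y, y2 \in Y, y1 != y2, e (v 0) y1 & e (v 0) y2].
Proof.
case: first_Y_nbr => y1 y1Y e01.
case: (boolP [exists y2 in Y, (y2 != y1) && e (v 0) y2]).
  by case/existsP => y2 /and3P [y2Y ne e02]; exists y1, y2; rewrite eq_sym.
move/existsPn => hno; exfalso.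
have nbE : nbh [set: V] e (v 0) = [set y1; v 1].
  apply/setP => u; rewrite !inE /=; apply/idP/idP.
    move=> eu; move: (subsetP (H1 d) u); rewrite !inE eu => /(_ isT) /orP [uY|->].
      by move: (hno u); rewrite uY eu andbT negbK => ->.
    by rewrite orbT.
  by case/orP => /eqP ->; rewrite ?e01 // p_adj.
case: Hcable => [[/and3P [pu _ _] cab] mx].
have cq : cable_path [set: V] e (y1 :: p).
  split.
    apply/and3P; split.
    - by rewrite cons_uniq Y_notin_p.
    - by apply/allP => x; rewrite inE.
    - apply/(sortedP d) => -[|i] /= hi; first by rewrite e_sym.
      by apply: p_adj; lia.
  move=> -[|[|i]] x0 // _ hi /=.
    by rewrite (set_nth_default d x0 (ltnW Hsize)) (set_nth_default d x0 Hsize) nbE.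
  by apply: (cab i.+1 x0 isT); move: hi => /=; lia.
by move: (mx _ cq); rewrite (suffix_infix [:: y1] p) /= => /(_ isT); lia.
Qed.

Local Notation off_p := (connect (restr (~: [set x in p]) e)).

Lemma off_p_sym : connect_sym (restr (~: [set x in p]) e).
Proof. exact/sym_connect_sym/restr_sym. Qed.

Lemma off_p_mono_comp (S : {set V}) : mono_comp e f S -> {subset S <= [predC p]} ->
  {in S &, forall x y, off_p x y}.
Proof.
move=> [[_ _ Sc] _] Sp x y xS yS; apply: connect_restrS (Sc _ _ xS yS).
by apply/subsetP => w /Sp; rewrite !inE.
Qed.

(* A walk from Y to [v 1] avoiding [v 0] can only enter P from Z. *)
Lemma off_p_Y_Z : exists y z, [/\ y \in Y, z \in Z & off_p y z].
Proof.
case: G2 => _ [_ hc]; case: first_Y_nbr => y1 y1Y _; have y1p := Y_notin_p y1Y.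
have y1v0 : y1 != v 0 by apply: contraNneq y1p => ->; apply: v_mem; lia.
have v10 : v 1 != v 0 by rewrite eq_sym v0_neq_v1.
have c1 := hc (v 0) y1 (v 1); rewrite !inE v10 y1v0 in c1.
case: (@connect_first_entry _ _ [set x in p] _ _ _ _ _ (c1 isT isT)); rewrite ?inE //.
  by apply: v_mem.
move=> a [b [+ + bS eab ca]]; rewrite !inE => ap bp; exists y1, a; split=> //; last first.
  by apply: connect_restrS ca; apply/subsetP => w; rewrite !inE => /andP [].
move: eab; rewrite e_sym -{1}(v_index bp) => eba.
case: (p_nbr_cases (index_p_lt bp) eba) => [[ap' _]|[h _]|[_ //]].
  by rewrite ap' in ap.
by move: bS; rewrite -(v_index bp) h !inE eqxx.
Qed.

Lemma off_p_to_YZ x : x \notin p -> exists2 w, w \in Y :|: Z & off_p x w.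
Proof.
move=> xp; case: G2 => _ [hc _]; have c1 := hc x (v 0); rewrite !inE in c1.
case: (@connect_first_entry _ _ [set x in p] _ _ _ _ _ (c1 isT isT)); rewrite ?inE //.
  by apply: v_mem; lia.
move=> a [b [+ + _ eab ca]]; rewrite !inE => ap bp; exists a; last by rewrite setTD in ca.
move: eab; rewrite e_sym -{1}(v_index bp) => eba.
case: (p_nbr_cases (index_p_lt bp) eba) => [[ap' _]|[_ aY]|[_ aZ]].
- by rewrite ap' in ap.
- by rewrite inE aY.
- by rewrite inE aZ orbT.
Qed.

Lemma off_p_connected : gconnected (~: [set x in p]) e.
Proof.
have YnP : {subset Y <= [predC p]} by move=> w /Y_notin_p.
have ZnP : {subset Z <= [predC p]} by move=> w /Z_notin_p.
case: off_p_Y_Z => y0 [z0 [y0Y z0Z c0]].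
have to_y0 x : x \notin p -> off_p x y0.
  case/off_p_to_YZ => w; rewrite inE => /orP [wY|wZ] cw.
    exact: connect_trans cw (off_p_mono_comp HY YnP wY y0Y).
  apply: connect_trans cw (connect_trans (off_p_mono_comp HZ ZnP wZ z0Z) _).
  by rewrite off_p_sym.
move=> x y; rewrite !inE => xp yp.
by apply: connect_trans (to_y0 _ xp) _; rewrite off_p_sym; apply: to_y0.
Qed.

(* Obtained in the main theorem from [first_Y_nbr] for the reversed path. *)
Hypothesis HzN : exists2 z, z \in Z & e (v n.-1) z.
Hypothesis HYZ : Y != Z.

Lemma off_wit_reaches_off_p z0 x : z0 \in p -> x \notin wit F z0 ->
  exists2 w, w \notin p & connect (restr (~: wit F z0) e) x w.
Proof.
move=> z0p xW; set W := wit F z0.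
case xp: (x \in p); last by exists x; rewrite ?xp ?connect0.
set k := ix x; have kn : k < n by apply: index_p_lt.
have vk : v k = x by apply: v_index.
have vnW j : j < n -> (j < k) != (ix z0 < k) -> v j \in ~: W.
  move=> jn; rewrite in_setC; apply: contra => vjW.
  by rewrite -(wit_same_side z0p kn _ vjW) ?index_v ?vk.
have z0k : ix z0 != k by apply: contraNneq xW => E; rewrite -vk -E v_index // wit_refl.
case: (ltnP (ix z0) k) => hz.
  case: HzN => z1 z1Z ez1; exists z1; first exact: Z_notin_p.
  have seg : connect (restr (~: W) e) (v k) (v n.-1).
    apply: connect_p_segment; [by move: kn; clear; lia | by move: Hsize; clear; lia |].
    by move=> m km mn; apply: vnW; [move: mn Hsize; clear; lia | rewrite ltnNge km hz].
  rewrite -vk; apply: connect_trans seg (connect1 _).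
  have z1W : z1 \notin W := contra (wit_sub_p z0p) (Z_notin_p z1Z).
  rewrite restrE ez1 !in_setC z1W andbT -in_setC.
  by apply: vnW; [move: Hsize; clear; lia | rewrite ltnNge -ltnS prednK ?kn ?hz //; lia].
have kz : k < ix z0 by rewrite ltn_neqAle hz eq_sym z0k.
case: first_Y_nbr => y1 y1Y e01; exists y1; first exact: Y_notin_p.
have notW m : m <= k -> v m \in ~: W.
  case: (ltnP m k) => mk' mk; last by rewrite (_ : m = k) ?vk ?in_setC //; lia.
  by apply: vnW; [lia | rewrite mk' ltnNge (ltnW kz)].
have seg : connect (restr (~: W) e) (v 0) (v k).
  by apply: connect_p_segment => // m _; exact: notW.
rewrite -vk (sym_connect_sym (restr_sym _ e_sym)).
apply: connect_trans (connect1 _) seg.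
have y1W : y1 \notin W := contra (wit_sub_p z0p) (Y_notin_p y1Y).
by rewrite restrE e_sym e01 notW // in_setC y1W.
Qed.

Lemma off_wit_connected z0 : z0 \in p -> gconnected (~: wit F z0) e.
Proof.
move=> z0p; have sub : ~: [set x in p] \subset ~: wit F z0.
  by apply/subsetP => w; rewrite !in_setC in_set; apply: contra => /(wit_sub_p z0p).
have sy := sym_connect_sym (restr_sym (~: wit F z0) e_sym).
move=> x y; rewrite !in_setC => xW yW.
case: (off_wit_reaches_off_p z0p xW) => wx wxp cx.
case: (off_wit_reaches_off_p z0p yW) => wy wyp cy.
have cw : connect (restr (~: wit F z0) e) wx wy.
  by apply: connect_restrS sub _; apply: off_p_connected; rewrite !inE.
by apply: connect_trans cx (connect_trans cw _); rewrite sy.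
Qed.

Lemma quotient_off_wit_connected z0 : z0 \in p ->
  gconnected (wstruct F :\ wit F z0) (qadj e).
Proof.
move=> z0p X X'; rewrite !in_setD1 => /andP [XW XS] /andP [XW' XS'].
case/wstructP: XS XW => zx -> XW; case/wstructP: XS' XW' => zy -> XW'.
have nW z : wit F z != wit F z0 -> z \in ~: wit F z0.
  by rewrite in_setC; apply: contra => /(wit_eq F_edges) ->.
have zxW := nW _ XW; have zyW := nW _ XW'.
have inT : {in ~: wit F z0, forall z, wit F z \in wstruct F :\ wit F z0}.
  by move=> z; rewrite in_setC => zW; rewrite in_setD1 wit_neq // wit_in.
exact: connect_wit inT zxW (off_wit_connected z0p zxW zyW).
Qed.

Lemma wit_nbr_toward_Z z0 : z0 \in p ->
  exists u r, [/\ u \in wit F z0, e u r, r \notin wit F z0 & (r \in p) || (r \in Z)].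
Proof.
move=> z0p; set U := wit F z0.
case: (boolP (v n.-1 \in U)) => hl.
  case: HzN => z zZ ez; exists (v n.-1), z; split=> //; last by rewrite zZ orbT.
  exact: contra (wit_sub_p z0p) (Z_notin_p zZ).
have ixn : ix z0 <= n.-1 by move: (index_p_lt z0p); clear; lia.
have z0U : v (ix z0) \in U by rewrite v_index ?wit_refl.
have [k [_ kn Pk Pk1]] := nat_crossing (P := fun j => v j \in U) ixn z0U hl.
have kn1 : k.+1 < n by move: kn Hsize; clear; lia.
by exists (v k), (v k.+1); rewrite p_adj ?v_mem.
Qed.

(* The node [W(v 0)] of the cactus would otherwise have three distinct
   neighbours while not being a cut vertex. *)
Lemma big_wit_in_Y : exists2 W, W \in wstruct F & (1 < #|W|) && (W \subset Y).
Proof.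
case: first_two_Y_nbrs => y1 [y2 [y1Y y2Y ne12 e1 e2]].
have v0p : v 0 \in p by apply: v_mem; lia.
set U := wit F (v 0).
have [u [r [uU eur rU rPZ]]] := wit_nbr_toward_Z v0p.
have yU y : y \in Y -> y \notin U by move=> yY; apply: contra (wit_sub_p v0p) (Y_notin_p yY).
have rY y : y \in Y -> y \notin wit F r.
  move=> yY; case/orP: rPZ => [rp|rZ]; first exact: contra (wit_sub_p rp) (Y_notin_p yY).
  exact: contra (wit_sub_mono_comp e_sym F_edges Hmono HZ rZ) (mono_comps_disjoint HY HZ HYZ yY).
case: (eqVneq (wit F y1) (wit F y2)) => E.
  exists (wit F y1); first exact: wit_in.
  apply/andP; split; first by apply/card_gt1P; exists y1, y2; rewrite wit_refl E wit_refl.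
  by apply/subsetP => w; exact: (wit_sub_mono_comp e_sym F_edges Hmono HY y1Y).
case: HF => _ cac _; exfalso.
have inT z : wit F z != U -> wit F z \in wstruct F :\ U by rewrite in_setD1 wit_in => ->.
have qU z w : w \in U -> e w z -> z \notin U -> qadj e U (wit F z).
  by move=> wU ewz zU; apply: qadjI ewz; rewrite ?wit_refl // eq_sym wit_neq.
apply: (cactus_three_nbrs_cut (qadj_sym e_sym) cac (wit_in F (v 0)) _ _ _
  (qU _ _ (wit_refl _ _) e1 (yU _ y1Y)) (qU _ _ (wit_refl _ _) e2 (yU _ y2Y))
  (qU _ _ uU eur rU) E) (quotient_off_wit_connected v0p).
- exact/inT/wit_neq/yU.
- exact/inT/wit_neq/yU.
- exact/inT/wit_neq.
- exact/wit_neq/rY.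
- exact/wit_neq/rY.
Qed.

Section RemovePathEdge.
Variable i : nat.
Hypothesis hi : i.+1 < n.
Hypothesis hF : (v i, v i.+1) \in F.

Let x := v i.
Let y := v i.+1.
Let F' := F :\ (x, y) :\ (y, x).
Let W := wit F x.
Let W1 := wit F' x.
Let W2 := wit F' y.
Let T' := wstruct F'.

Let xp : x \in p. Proof. by apply: v_mem; apply: ltnW. Qed.
Let yp : y \in p. Proof. exact: v_mem. Qed.
Let ix_x : ix x = i. Proof. by rewrite index_v // ltnW. Qed.
Let ix_y : ix y = i.+1. Proof. by rewrite index_v. Qed.

Let F'_in a b : ((a, b) \in F') = [&& (a, b) != (y, x), (a, b) != (x, y) & (a, b) \in F].
Proof. by rewrite !in_setD1. Qed.

Let F'_F a b : (a, b) \in F' -> (a, b) \in F.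
Proof. by rewrite F'_in => /and3P []. Qed.

Let F'_sub : F' \subset F.
Proof. by apply/subsetP => -[a b] /F'_F. Qed.

Let F'_edges : edge_subset e F'.
Proof.
move=> a b; rewrite F'_in => /and3P [n1 n2 abF]; case: (F_edges abF) => eab baF.
split=> //; rewrite F'_in baF andbT.
by apply/andP; split; [apply: contra n2 | apply: contra n1];
  rewrite !xpair_eqE => /andP [/eqP -> /eqP ->]; rewrite !eqxx.
Qed.

Let F'_proper : F' \proper F.
Proof. by apply/properP; split; [exact: F'_sub | exists (x, y); rewrite ?F'_in ?eqxx ?andbF]. Qed.

Let F'_step a b : (a, b) \in F' -> a \in p ->
  b \in p /\ (ix b = (ix a).+1 \/ (ix b).+1 = ix a).
Proof.
move=> abF' ap; have abF := F'_F abF'; have bp := F_edge_on_p abF ap.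
case: (F_edges abF) => eab _; move: eab; rewrite -{1}(v_index ap) => eab.
case: (p_nbr_cases (index_p_lt ap) eab) => [[_ //]|[_ bY]|[_ bZ]].
- by rewrite (negPf (p_notin_Y bp)) in bY.
- by rewrite (negPf (p_notin_Z bp)) in bZ.
Qed.

Let W1_left w : w \in W1 -> (w \in p) && (ix w <= i).
Proof.
rewrite witP; apply: (connect_preserve (P := fun b => (b \in p) && (ix b <= i)));
  last by apply/andP; split; [exact: xp | rewrite ix_x].
move=> a b /andP [ap ai]; rewrite frelE => abF'; case: (F'_step abF' ap) => bp [] h; rewrite bp //=.
  case: (ltnP (ix a) i) => ha; first by rewrite h.
  have aE : a = x by rewrite -(v_index ap) /x; congr nth; apply/eqP; rewrite eqn_leq ha ai.
  have bE : b = y by rewrite -(v_index bp) /y h aE ix_x.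
  by move: abF'; rewrite F'_in aE bE eqxx andbF.
by move: h ai; clear; lia.
Qed.

Let W2_right w : w \in W2 -> (w \in p) && (i < ix w).
Proof.
rewrite witP; apply: (connect_preserve (P := fun b => (b \in p) && (i < ix b)));
  last by apply/andP; split; [exact: yp | rewrite ix_y].
move=> a b /andP [ap ai]; rewrite frelE => abF'; case: (F'_step abF' ap) => bp [] h; rewrite bp //=.
  by move: h ai; clear; lia.
case: (ltnP (ix a) i.+2) => ha; last by move: ha h ai; clear; lia.
have aE : a = y by rewrite -(v_index ap) /y; congr nth; apply/eqP; rewrite eqn_leq ai -ltnS ha.
have bE : b = x by rewrite -(v_index bp) /x; congr nth; move: h; rewrite aE ix_y; clear; lia.
by move: abF'; rewrite F'_in aE bE eqxx.
Qed.

Let W1p w : w \in W1 -> w \in p. Proof. by case/W1_left/andP. Qed.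
Let W2p w : w \in W2 -> w \in p. Proof. by case/W2_right/andP. Qed.

Let xW : x \in W. Proof. exact: wit_refl. Qed.
Let yW : y \in W. Proof. by rewrite witP connect1. Qed.
Let wit_y : wit F y = W. Proof. exact: (wit_eq F_edges yW). Qed.

Let W1_sub w : w \in W1 -> w \in W.
Proof. by rewrite !witP; apply: connect_frelS. Qed.

Let W2_sub w : w \in W2 -> w \in W.
Proof. by rewrite -wit_y !witP; apply: connect_frelS. Qed.

Let W_split w : w \in W -> (w \in W1) || (w \in W2).
Proof.
rewrite witP; apply: (connect_preserve (P := fun b => (b \in W1) || (b \in W2)));
  last by rewrite /= wit_refl.
move=> a b Pa; rewrite frelE => abF; case: (boolP ((a, b) \in F')) => abF'.
  by case/orP: Pa; rewrite !witP => h; apply/orP; [left|right];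
    apply: connect_trans h (connect1 _).
move: abF'; rewrite F'_in abF andbT negb_and !negbK !xpair_eqE.
by case/orP => /andP [_ /eqP ->]; rewrite wit_refl ?orbT.
Qed.

Let wit_F'_out z : z \notin W -> wit F' z = wit F z.
Proof.
move=> zW; apply/setP => w; rewrite !witP; apply/idP/idP; first exact: connect_frelS.
apply: (connect_transfer (P := fun b => b \in wit F z)); last exact: wit_refl.
move=> a b aZ; rewrite frelE => abF; rewrite witP (connect_trans _ (connect1 abF)) -?witP // andbT.
rewrite frelE F'_in abF andbT !xpair_eqE.
have ax : a != x by apply: contraNneq zW => E; rewrite /W -E (wit_eq F_edges aZ) wit_refl.
have ay : a != y by apply: contraNneq zW => E; rewrite -wit_y -E (wit_eq F_edges aZ) wit_refl.
by rewrite (negPf ax) (negPf ay).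
Qed.

Let y_notin_W1 : y \notin W1. Proof. by apply/negP => /W1_left; rewrite ix_y ltnn andbF. Qed.
Let x_notin_W2 : x \notin W2. Proof. by apply/negP => /W2_right; rewrite ix_x ltnn andbF. Qed.

Let W_notin_T' : W \notin T'.
Proof.
apply/negP => /wstructP [z E]; have zW : z \in W by rewrite E wit_refl.
case/orP: (W_split zW) => zW'.
  by move: y_notin_W1; rewrite /W1 -(wit_eq F'_edges zW') -E yW.
by move: x_notin_W2; rewrite /W2 -(wit_eq F'_edges zW') -E xW.
Qed.

Let T'_other X : X \in T' -> X != W1 -> X != W2 ->
  exists2 z, z \notin W & X = wit F z.
Proof.
case/wstructP => z -> n1 n2; case: (boolP (z \in W)) => zW.
  by case/orP: (W_split zW) => /(wit_eq F'_edges) E; rewrite E eqxx in n1 n2.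
by exists z; rewrite ?wit_F'_out.
Qed.

Let T'_other_in_T X : X \in T' -> X != W1 -> X != W2 -> X \in wstruct F :\ W.
Proof.
by move=> XT n1 n2; case: (T'_other XT n1 n2) => z zW ->; rewrite in_setD1 wit_in wit_neq.
Qed.

Let notin_W_index z : z \in p -> z \notin W -> (ix z != i) && (ix z != i.+1).
Proof.
move=> zp zW; apply/andP; split; apply: contraNneq zW => E; by rewrite -(v_index zp) E.
Qed.

Let W1_nbr u z : u \in W1 -> e u z -> z \notin W -> ((z \in p) && (ix z < i)) || (z \in Y).
Proof.
case/W1_left/andP => up ui; rewrite -{1}(v_index up) => euz zW.
case: (p_nbr_cases (index_p_lt up) euz) => [[zp h]|[_ ->]|[h _]]; last 2 first.
- by rewrite orbT.
- by move: h ui hi; clear; lia.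
case/andP: (notin_W_index zp zW) => /eqP n0 /eqP n1.
by rewrite zp /=; move: h ui n0 n1; clear; lia.
Qed.

Let W2_nbr u z : u \in W2 -> e u z -> z \notin W -> ((z \in p) && (i.+1 < ix z)) || (z \in Z).
Proof.
case/W2_right/andP => up ui; rewrite -{1}(v_index up) => euz zW.
case: (p_nbr_cases (index_p_lt up) euz) => [[zp h]|[h _]|[_ ->]]; last 2 first.
- by move: h ui; clear; lia.
- by rewrite orbT.
case/andP: (notin_W_index zp zW) => /eqP n0 /eqP n1.
by rewrite zp /=; move: h ui n0 n1; clear; lia.
Qed.

Let A := [set X in T' | qadj e W1 X && (X != W2)].
Let B := [set X in T' | qadj e W2 X && (X != W1)].

Let A_nbr_W X : X \in A -> X \in wstruct F :\ W /\ qadj e W X.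
Proof.
rewrite inE => /and3P [XT qX n2].
have n1 : X != W1 by case: (qadjE qX) => h _; rewrite eq_sym.
split; first exact: T'_other_in_T.
case: (T'_other XT n1 n2) => z zW E; case: (qadjE qX) => _ [u [w [uW1 wX euw]]].
by apply: (qadjI _ (W1_sub uW1) wX euw); rewrite E eq_sym wit_neq.
Qed.

Let B_nbr_W X : X \in B -> X \in wstruct F :\ W /\ qadj e W X.
Proof.
rewrite inE => /and3P [XT qX n1].
have n2 : X != W2 by case: (qadjE qX) => h _; rewrite eq_sym.
split; first exact: T'_other_in_T.
case: (T'_other XT n1 n2) => z zW E; case: (qadjE qX) => _ [u [w [uW2 wX euw]]].
by apply: (qadjI _ (W2_sub uW2) wX euw); rewrite E eq_sym wit_neq.
Qed.

(* A common neighbour would be a witness set meeting P (or Y, or Z) on both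
   sides of the removed edge. *)
Let A_B_disjoint X : X \in A -> X \in B -> False.
Proof.
move=> XA XB; move: XA XB; rewrite !inE => /and3P [XT q1 n2] /and3P [_ q2 _].
have n1 : X != W1 by case: (qadjE q1); rewrite eq_sym.
case: (T'_other XT n1 n2) => z zW XE.
case: (qadjE q1) => _ [u1 [z1 [u1W z1X e1]]].
case: (qadjE q2) => _ [u2 [z2 [u2W z2X e2]]].
have nW w : w \in X -> w \notin W.
  rewrite XE => wX; apply: contra zW => wW.
  by rewrite /W -(wit_eq F_edges wW) (wit_eq F_edges wX) wit_refl.
have z21 : z2 \in wit F z1 by rewrite XE in z1X z2X; rewrite (wit_eq F_edges z1X).
have z1YZ := W1_nbr u1W e1 (nW _ z1X); have z2YZ := W2_nbr u2W e2 (nW _ z2X).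
case/orP: z1YZ => [/andP [z1p lt1]|z1Y].
  case/orP: z2YZ => [/andP [z2p lt2]|z2Z].
    have xz1 : x \notin wit F z1.
      by apply: contra (nW _ z1X) => /(wit_eq F_edges) E; rewrite /W E wit_refl.
    move: (wit_same_side z1p (ltnW hi) xz1 z21); rewrite lt1.
    by move: lt2; clear; lia.
  have z1Z : z1 \in Z by apply: (wit_sub_mono_comp e_sym F_edges Hmono HZ z2Z); rewrite (wit_sym F_edges).
  by rewrite (negPf (p_notin_Z z1p)) in z1Z.
have z2Y := wit_sub_mono_comp e_sym F_edges Hmono HY z1Y z21.
case/orP: z2YZ => [/andP [z2p _]|z2Z].
  by rewrite (negPf (p_notin_Y z2p)) in z2Y.
by rewrite (negPf (mono_comps_disjoint HY HZ HYZ z2Y)) in z2Z.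
Qed.

Let A_nonempty : exists X, X \in A.
Proof.
case: (boolP (v 0 \in W1)) => h0.
  case: first_Y_nbr => y1 y1Y e01; have y1p := Y_notin_p y1Y.
  have y1W1 : y1 \notin W1 by apply: contra y1p; apply: W1p.
  have y1W2 : y1 \notin W2 by apply: contra y1p; apply: W2p.
  exists (wit F' y1); rewrite inE wit_in (qadjI _ h0 (wit_refl _ _) e01) /=.
  - exact: wit_neq.
  - by rewrite eq_sym; apply: wit_neq.
have hx : ~~ (v i \notin W1) by rewrite negbK; exact: wit_refl.
have [k [_ ki Pk]] := nat_crossing (P := fun j => v j \notin W1) (leq0n i) h0 hx.
rewrite negbK => Pk1.
have k1n : k.+1 < n by apply: leq_ltn_trans ki (ltnW hi).
have vkW2 : v k \notin W2.
  by apply/negP => /W2_right; rewrite index_v ?(ltnW k1n) // ltnNge (ltnW ki) andbF.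
have ekk : e (v k.+1) (v k) by rewrite e_sym p_adj.
exists (wit F' (v k)); rewrite inE wit_in (qadjI _ Pk1 (wit_refl _ _) ekk) /=.
- exact: wit_neq.
- by rewrite eq_sym; apply: wit_neq.
Qed.

Let B_nonempty : exists X, X \in B.
Proof.
case: (boolP (v n.-1 \in W2)) => hl.
  case: HzN => z zZ ez; have zp := Z_notin_p zZ.
  have zW1 : z \notin W1 by apply: contra zp; apply: W1p.
  have zW2 : z \notin W2 by apply: contra zp; apply: W2p.
  exists (wit F' z); rewrite inE wit_in (qadjI _ hl (wit_refl _ _) ez) /=.
  - exact: wit_neq.
  - by rewrite eq_sym; apply: wit_neq.
have hin : i.+1 <= n.-1 by move: hi; clear; lia.
have [k [ik kn Pk Pk1]] := nat_crossing (P := fun j => v j \in W2) hin (wit_refl F' y) hl.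
have k1n : k.+1 < n by move: kn hi; clear; lia.
have vkW1 : v k.+1 \notin W1.
  apply/negP => /W1_left; rewrite index_v // => /andP [_].
  by move: ik; clear; lia.
exists (wit F' (v k.+1)); rewrite inE wit_in (qadjI _ Pk (wit_refl _ _) (p_adj k1n)) /=.
- exact: wit_neq.
- by rewrite eq_sym; apply: wit_neq.
Qed.
Let T_cactus : cactus (wstruct F) (qadj e). Proof. by case: HF. Qed.

(* [W] is not a cut vertex of the cactus [T], so it cannot have two
   neighbours in [A] besides one in [B]. *)
Let A_single X1 X2 : X1 \in A -> X2 \in A -> X1 = X2.
Proof.
move=> h1 h2; apply/eqP/negPn/negP => ne; case: B_nonempty => X3 h3.
case: (A_nbr_W h1) => m1 q1; case: (A_nbr_W h2) => m2 q2; case: (B_nbr_W h3) => m3 q3.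
apply: (cactus_three_nbrs_cut (qadj_sym e_sym) T_cactus (wit_in F x) m1 m2 m3 q1 q2 q3 ne);
  last exact: quotient_off_wit_connected xp.
- by apply/negP => /eqP E; apply: (A_B_disjoint h1); rewrite E.
- by apply/negP => /eqP E; apply: (A_B_disjoint h2); rewrite E.
Qed.

Let B_single X1 X2 : X1 \in B -> X2 \in B -> X1 = X2.
Proof.
move=> h1 h2; apply/eqP/negPn/negP => ne; case: A_nonempty => X3 h3.
case: (B_nbr_W h1) => m1 q1; case: (B_nbr_W h2) => m2 q2; case: (A_nbr_W h3) => m3 q3.
apply: (cactus_three_nbrs_cut (qadj_sym e_sym) T_cactus (wit_in F x) m1 m2 m3 q1 q2 q3 ne);
  last exact: quotient_off_wit_connected xp.
- by apply/negP => /eqP E; apply: (A_B_disjoint h3); rewrite -E.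
- by apply/negP => /eqP E; apply: (A_B_disjoint h3); rewrite -E.
Qed.

Let qsym := qadj_sym e_sym.

(* Otherwise the two cycle neighbours of [W2] would be distinct elements of [B]. *)
Let W1_on_T'_cycle c : is_gcycle T' (qadj e) c -> (W1 \in c) || (W2 \in c) -> W1 \in c.
Proof.
move=> gc hW; apply/negPn/negP => W1c; have W2c : W2 \in c by move: hW; rewrite (negPf W1c).
have g2 := is_gcycle_rot (index W2 c) gc; rewrite (rot_index W2c) in g2.
have W1n : W1 \notin W2 :: (drop (index W2 c).+1 c ++ take (index W2 c) c).
  by rewrite -(rot_index W2c) mem_rot.
move: g2 W1n; set t := drop _ _ ++ _ => g2 W1n.
case: (is_gcycle_consP g2) => _ ut st inS cy.
have tne : t != [::] by case: (t) st.
have hB : head W2 t \in B.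
  rewrite inE inS ?cycle_head_rel //=; last by rewrite inE head_mem ?orbT.
  by apply: contraNneq W1n => <-; rewrite inE head_mem ?orbT.
have lB : last W2 t \in B.
  rewrite inE inS /=; last by rewrite inE last_mem ?orbT.
  rewrite qsym cycle_last_rel //=.
  by apply: contraNneq W1n => <-; rewrite inE last_mem ?orbT.
by move/eqP: (uniq_head_last_neq W2 ut st); apply; apply: B_single.
Qed.

Let T'_cycle_normal c : is_gcycle T' (qadj e) c -> (W1 \in c) || (W2 \in c) ->
  exists s, is_gcycle T' (qadj e) (W1 :: W2 :: s) /\
    cycle_edges c = cycle_edges (W1 :: W2 :: s).
Proof.
move=> gc /(W1_on_T'_cycle gc) W1c; have uc : uniq c by case/and4P: gc.
have g1 := is_gcycle_rot (index W1 c) gc; rewrite (rot_index W1c) in g1.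
have E1 := cycle_edges_rot (index W1 c) uc; rewrite (rot_index W1c) in E1.
move: g1 E1; set t := drop _ _ ++ _ => g1 E1.
case: (is_gcycle_consP g1) => W1t ut st inS cy.
have tne : t != [::] by case: (t) st.
have hT : head W1 t \in T' by rewrite inS // inE head_mem ?orbT.
have lT : last W1 t \in T' by rewrite inS // inE last_mem ?orbT.
case: (eqVneq (head W1 t) W2) => hW2.
  move: g1 E1 hW2; case: (t) => [|h s] //= g1 E1 hE.
  by exists s; rewrite -hE -E1.
case: (eqVneq (last W1 t) W2) => lW2; last first.
  have hA : head W1 t \in A by rewrite inE hT cycle_head_rel //=.
  have lA : last W1 t \in A by rewrite inE lT qsym cycle_last_rel //=.
  by exfalso; move/eqP: (uniq_head_last_neq W1 ut st); apply; apply: A_single.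
move: g1 E1 lW2; case/lastP: (t) => [|s l] //.
rewrite last_rcons => g1 E1 lE; subst l.
exists (rev s); have u1 : uniq (W1 :: rcons s W2) by case/and4P: g1.
have -> : W1 :: W2 :: rev s = rotr 1 (rev (W1 :: rcons s W2)).
  by rewrite rev_cons rev_rcons rotr1_rcons.
split; first by apply: is_gcycle_rot; apply: is_gcycle_rev.
by rewrite -E1 cycle_edges_rot ?rev_uniq // cycle_edges_rev.
Qed.

Let T'_cycle_contract s : is_gcycle T' (qadj e) (W1 :: W2 :: s) ->
  [/\ s != [::], head W s \in B, last W s \in A, W \notin s &
      is_gcycle (wstruct F) (qadj e) (W :: s)].
Proof.
move=> g; case: (is_gcycle_consP g) => W1n u st inS cy.
move: u; rewrite cons_uniq => /andP [W2n us].
have sne : s != [::] by case: (s) st.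
have sT z : z \in s -> z \in T' by move=> zs; apply: inS; rewrite !inE zs !orbT.
move: (cycle_path cy) => /= /andP [_ p2].
have hB : head W s \in B.
  rewrite (head_nonnil _ W2 sne) inE sT ?head_mem // path_head_rel //=.
  by apply: contraNneq W1n => <-; rewrite inE head_mem ?orbT.
have lA : last W s \in A.
  rewrite (last_nonnil _ W2 sne) inE sT ?last_mem //=.
  have := cycle_last_rel cy; rewrite /= qsym => -> /=.
  by apply: contraNneq W2n => <-; rewrite last_mem.
have Wn : W \notin s by apply: contra W_notin_T' => /sT.
have sF z : z \in s -> z \in wstruct F.
  move=> zs; have h1 : z != W1 by apply: contraNneq W1n => <-; rewrite inE zs orbT.
  have h2 : z != W2 by apply: contraNneq W2n => <-.
  by move: (T'_other_in_T (sT _ zs) h1 h2); rewrite in_setD1 => /andP [].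
have hl : head W s != last W s by apply/eqP => E; apply: (A_B_disjoint lA); rewrite -E.
split=> //; apply/and4P; split.
- by rewrite cons_uniq Wn us.
- by move: hl; case: (s) => [|h [|h2 sx]] //=; rewrite eqxx.
- by apply/allP => z; rewrite inE => /orP [/eqP ->|/sF //]; apply: wit_in.
- case: (A_nbr_W lA) => _ qWl; case: (B_nbr_W hB) => _ qWh.
  rewrite /= rcons_path; apply/andP; split; last by rewrite qsym.
  by move: p2 qWh; case: (s) sne => //= h s' _ /andP [_ ->] ->.
Qed.

Let cycle_edges_W1W2 s : s != [::] -> uniq (W1 :: W2 :: s) ->
  cycle_edges (W1 :: W2 :: s) =
  [set [set W1; W2]] :|: ([set [set W2; head W s]] :|: path_edges s) :|: [set [set last W s; W1]].
Proof. by move=> sne u; rewrite cycle_edges_cons //=; case: (s) sne u. Qed.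

Let T'_cycle_in_T c : is_gcycle T' (qadj e) c -> ~~ ((W1 \in c) || (W2 \in c)) ->
  is_gcycle (wstruct F) (qadj e) c.
Proof.
case/and4P => u sz al cy; rewrite negb_or => /andP [n1 n2].
apply/and4P; split=> //; apply/allP => z zc.
have h1 : z != W1 by apply: contraNneq n1 => <-.
have h2 : z != W2 by apply: contraNneq n2 => <-.
by move: (T'_other_in_T (allP al _ zc) h1 h2); rewrite in_setD1 => /andP [].
Qed.

(* A common edge of the contracted cycle and a cycle of [T] avoiding [W]
   would force them to be equal, yet only the first passes through [W]. *)
Let T'_cycles_mixed c1 c2 E : is_gcycle T' (qadj e) c1 -> is_gcycle T' (qadj e) c2 ->
  (W1 \in c1) || (W2 \in c1) -> ~~ ((W1 \in c2) || (W2 \in c2)) ->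
  E \in cycle_edges c1 -> E \in cycle_edges c2 -> False.
Proof.
move=> g1 g2 h1 h2 E1 E2.
case: (T'_cycle_normal g1 h1) => s [g Es]; case: (T'_cycle_contract g) => sne _ _ Wn gT.
have u : uniq (W1 :: W2 :: s) by case/and4P: g.
have uW : uniq (W :: s) by case/and4P: gT.
have a2 := T'_cycle_in_T g2 h2; move: h2; rewrite negb_or => /andP [n1 n2].
have nE X : X \in E -> X \in c2 by apply: cycle_edges_mem.
have Ep : E \in path_edges s.
  move: E1; rewrite Es cycle_edges_W1W2 // !in_setU !in_set1.
  case/orP => [/orP [/eqP EE|/orP [/eqP EE|//]]|/eqP EE].
  - by move: (nE W1); rewrite EE !inE eqxx (negPf n1) => /(_ isT).
  - by move: (nE W2); rewrite EE !inE eqxx (negPf n2) => /(_ isT).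
  - by move: (nE W1); rewrite EE !inE eqxx orbT (negPf n1) => /(_ isT).
have ES : E \in cycle_edges (W :: s) by rewrite cycle_edges_cons // !in_setU Ep orbT.
have LW : [set last W s; W] \in cycle_edges (W :: s).
  by rewrite cycle_edges_cons // !in_setU !in_set1 eqxx orbT.
rewrite (T_cactus.2 _ _ _ gT a2 ES E2) in LW.
have Wc2 : W \in c2 by apply: cycle_edges_mem LW _; rewrite !inE eqxx orbT.
by case/and4P: g2 => _ _ /allP al _; move: W_notin_T'; rewrite al.
Qed.

(* Each cycle of [T'] has the same edge set as a cycle of [T], with the edge
   [W1 W2] and the edges at [W1], [W2] coming from those at [W]. *)
Let T'_cactus : cactus T' (qadj e).
Proof.
split.
  move=> X X' /wstructP [a ->] /wstructP [b ->].
  apply: (@connect_wit _ _ _ [set: V]); first by move=> z _; apply: wit_in.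
    by rewrite inE.
  by case: G2 => _ [h _]; apply: h; rewrite inE.
move=> c1 c2 E g1 g2 E1 E2.
case: (boolP ((W1 \in c1) || (W2 \in c1))) => h1;
  case: (boolP ((W1 \in c2) || (W2 \in c2))) => h2.
- case: (T'_cycle_normal g1 h1) => s1 [g1' Es1].
  case: (T'_cycle_contract g1') => sne1 hB1 lA1 Wn1 gT1.
  case: (T'_cycle_normal g2 h2) => s2 [g2' Es2].
  case: (T'_cycle_contract g2') => sne2 hB2 lA2 Wn2 gT2.
  have u1 : uniq (W1 :: W2 :: s1) by case/and4P: g1'.
  have u2 : uniq (W1 :: W2 :: s2) by case/and4P: g2'.
  have uW1 : uniq (W :: s1) by case/and4P: gT1.
  have uW2 : uniq (W :: s2) by case/and4P: gT2.
  have hE := B_single hB1 hB2; have lE := A_single lA1 lA2.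
  have L1 : [set last W s1; W] \in cycle_edges (W :: s1).
    by rewrite cycle_edges_cons // !in_setU !in_set1 eqxx orbT.
  have L2 : [set last W s1; W] \in cycle_edges (W :: s2).
    by rewrite cycle_edges_cons // lE !in_setU !in_set1 eqxx orbT.
  have EW := T_cactus.2 _ _ _ gT1 gT2 L1 L2.
  have pE : path_edges s1 = path_edges s2.
    by rewrite (path_edges_avoid Wn1) // (path_edges_avoid Wn2) // EW.
  by rewrite Es1 Es2 !cycle_edges_W1W2 // hE lE pE.
- by exfalso; apply: (T'_cycles_mixed g1 g2 h1 h2 E1 E2).
- by exfalso; apply: (T'_cycles_mixed g2 g1 h2 h1 E2 E1).
- exact: T_cactus.2 _ _ _ (T'_cycle_in_T g1 h1) (T'_cycle_in_T g2 h2) E1 E2.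
Qed.

Lemma removed_path_edge_absurd : False.
Proof. by case: HF => _ _ /(_ F' F'_edges F'_proper); apply; exact: T'_cactus. Qed.

End RemovePathEdge.

Lemma path_edge_notin_F k : k.+1 < n -> (v k, v k.+1) \notin F.
Proof. by move=> hk; apply/negP => /(removed_path_edge_absurd hk). Qed.

Lemma wit_p_singleton w : w \in p -> #|wit F w| = 1.
Proof.
move=> wp; suff -> : wit F w = [set w] by rewrite cards1.
apply/setP => u; rewrite inE; apply/idP/eqP => [|->]; last exact: wit_refl.
rewrite witP => /connectP [[|h s] /=]; first by move=> _ ->.
case/andP; rewrite frelE => whF _ _; exfalso.
have hp := F_edge_on_p whF wp; case: (F_edges whF) => ewh hwF.
move: ewh; rewrite -{1}(v_index wp) => ewh.
case: (p_nbr_cases (index_p_lt wp) ewh) => [[_ [] hE]|[_ hY]|[_ hZ]].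
- have k1 : (ix w).+1 < n by rewrite -hE index_p_lt.
  by move: (path_edge_notin_F k1); rewrite v_index // -hE v_index // whF.
- have k1 : (ix h).+1 < n by rewrite hE index_p_lt.
  by move: (path_edge_notin_F k1); rewrite v_index // hE v_index // hwF.
- by rewrite (negPf (Y_notin_p hY)) in hp.
- by rewrite (negPf (Z_notin_p hZ)) in hp.
Qed.

End CablePathComponent.

Section Reversal.
Variables (V : finType) (e : rel V).
Hypothesis e_sym : symmetric e.

Lemma rev_cable_path (p : seq V) : cable_path [set: V] e p -> cable_path [set: V] e (rev p).
Proof.
move=> [/and3P [u al so] cab]; split.
  rewrite /is_gpath rev_uniq all_rev u al rev_sorted /=.
  by case: p {u al cab} so => //= a s; rewrite (@eq_path _ _ e) // => x y; rewrite e_sym.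
move=> i x0 ip; rewrite size_rev => hi; have hi' : i < size p by apply: ltn_trans hi.
rewrite !nth_rev //; last by apply: leq_trans hi'; apply: leq_pred.
have -> : size p - i.+2 = (size p - i.+1).-1 by move: hi; clear; lia.
have -> : size p - i.-1.+1 = (size p - i.+1).+1 by move: hi ip; clear; lia.
by rewrite setUC; apply: cab; move: hi ip; clear; lia.
Qed.

Lemma rev_max_cable_path (p : seq V) :
  max_cable_path [set: V] e p -> max_cable_path [set: V] e (rev p).
Proof.
move=> [cp mx]; split; first exact: rev_cable_path.
by move=> q cq; rewrite revK size_rev orbC; apply: mx.
Qed.

Lemma nth_rev_first (x0 : V) (p : seq V) : 1 < size p ->
  nth x0 (rev p) 0 = nth x0 p (size p).-1 /\ nth x0 (rev p) 1 = nth x0 p (size p).-2.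
Proof. by move=> hp; rewrite !nth_rev ?subn1 ?subn2 //; apply: ltnW. Qed.

Lemma nth_rev_last (x0 : V) (p : seq V) : 1 < size p ->
  nth x0 (rev p) (size (rev p)).-1 = nth x0 p 0 /\
  nth x0 (rev p) (size (rev p)).-2 = nth x0 p 1.
Proof.
move=> hp; rewrite size_rev !nth_rev; try (move: hp; clear; lia).
by split; congr nth; move: hp; clear; lia.
Qed.

End Reversal.

(* Only condition (1) of compatibility is needed. The hypotheses are symmetric
   under exchanging Y with Z and reversing P, and each half of the argument
   supplies the neighbour of the far end of P ([lastZ], [lastY]) that the
   other one needs. *)
Theorem lemma4p3 (V : finType) (e : rel V)
  (e_sym : symmetric e) (e_irr : irreflexive e)
  (G2 : two_connected e)
  (F : {set V * V}) (HF : minimal_cactus_set e F)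
  (f : V -> 'I_3) (Hf : compatible e F f)
  (Y Z : {set V}) (HY : mono_comp e f Y) (HZ : mono_comp e f Z) (HYZ : Y != Z)
  (p : seq V) (Hsize : 2 <= size p)
  (Hcomp : conn_comp (~: (Y :|: Z)) e [set x in p])
  (Hcable : max_cable_path [set: V] e p)
  (H1 : forall x0 : V,
     nbh [set: V] e (nth x0 p 0) \subset Y :|: [set nth x0 p 1])
  (Hl : forall x0 : V,
     nbh [set: V] e (nth x0 p (size p).-1) \subset Z :|: [set nth x0 p (size p).-2]) :
  (forall v, v \in p -> #|wit F v| = 1) /\
  (exists2 W, W \in wstruct F & (1 < #|W|) && (W \subset Y)) /\
  (exists2 W, W \in wstruct F & (1 < #|W|) && (W \subset Z)).
Proof.
case: Hf => Hmono _ _.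
have [d _] : exists d : V, true by case: (p) Hsize => // d; exists d.
have Hsize' : 1 < size (rev p) by rewrite size_rev.
have Hcomp' : conn_comp (~: (Z :|: Y)) e [set x in rev p].
  by rewrite setUC (_ : [set x in rev p] = [set x in p]) //; apply/setP => z; rewrite !inE mem_rev.
have Hcable' := rev_max_cable_path e_sym Hcable.
have H1' x0 : nbh [set: V] e (nth x0 (rev p) 0) \subset Z :|: [set nth x0 (rev p) 1].
  by case: (nth_rev_first x0 Hsize) => -> ->.
have Hl' x0 : nbh [set: V] e (nth x0 (rev p) (size (rev p)).-1) \subset
    Y :|: [set nth x0 (rev p) (size (rev p)).-2].
  by case: (nth_rev_last x0 Hsize) => -> ->.
have HYZ' : Z != Y by rewrite eq_sym.
have lastZ : exists2 z, z \in Z & e (nth d p (size p).-1) z.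
  by case: (nth_rev_first d Hsize) => <- _; exact: (first_Y_nbr G2 Hsize' Hcable' H1' d).
have lastY : exists2 y, y \in Y & e (nth d (rev p) (size (rev p)).-1) y.
  by case: (nth_rev_last d Hsize) => -> _; exact: (first_Y_nbr G2 Hsize Hcable H1 d).
split; [|split].
- by move=> w; exact: (wit_p_singleton e_sym G2 HF Hmono HY HZ Hsize Hcomp Hcable H1 Hl lastZ HYZ).
- exact: (big_wit_in_Y e_sym G2 HF Hmono HY HZ Hsize Hcomp Hcable H1 Hl lastZ HYZ).
- exact: (big_wit_in_Y e_sym G2 HF Hmono HZ HY Hsize' Hcomp' Hcable' H1' Hl' lastY HYZ').
Qed.
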